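(* Let $f:[0,1]\to[0,1]$ be a surjective continuous function that does not admit a splitting sequence. Let $F$ be the set of fixed points of $f$ and let $d$ be an accumulation point of $F$. Then $$\varprojlim f=\varprojlim([0,d],f|_{[0,d]})\cup\varprojlim([d,1],f|_{[d,1]})$$ and $$\varprojlim([0,d],f|_{[0,d]})\cap\varprojlim([d,1],f|_{[d,1]})=\{(d,d,\dots)\}.$$
   Context: $\varprojlim f=\{\mathbf x=(x_0,x_1,\dots)\in[0,1]^{\mathbb N}: f(x_{n+1})=x_n\ \forall n\}$ with the product topology. For a closed interval $J\subseteq[0,1]$, $\varprojlim(J,f|_J)=\{\mathbf x\in\varprojlim f: x_n\in J\text{ for all }n\}$. A sequence $(T_n)_{n\in\mathbb N}$ of closed intervals $T_n\subsetneq[0,1]$ (possibly degenerate) is tight if $f(T_{n+1})=T_n$ for every $n$ and $T_n$ is nondegenerate for all sufficiently large $n$. A tight sequence $(T_n)$, $T_n=[l_n,r_n]$, is a splitting sequence admitted by $f$ if there are an infinite set $N\subseteq\mathbb N$ and nondegenerate closed intervals $S_n\subseteq[0,1]$ ($n\in N$) with $S_n\cap T_n\subseteq\{l_n,r_n\}$ and $f(S_n)=f(T_n)$ for all $n\in N$. *)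

From Stdlib Require Import Reals Lra.
Open Scope R_scope.

Definition inI (a b x : R) : Prop := a <= x /\ x <= b.

Definition maps_unit (f : R -> R) : Prop := forall x, inI 0 1 x -> inI 0 1 (f x).

Definition cont_unit (f : R -> R) : Prop :=
  forall x, inI 0 1 x -> forall eps, 0 < eps ->
    exists delta, 0 < delta /\
      forall y, inI 0 1 y -> Rabs (y - x) < delta -> Rabs (f y - f x) < eps.

Definition surj_unit (f : R -> R) : Prop :=
  forall y, inI 0 1 y -> exists x, inI 0 1 x /\ f x = y.

Definition image_eq (f : R -> R) (a b c d : R) : Prop :=
  forall y, inI c d y <-> exists x, inI a b x /\ f x = y.

Definition inv_lim (f : R -> R) (x : nat -> R) : Prop :=
  (forall n, inI 0 1 (x n)) /\ (forall n, f (x (S n)) = x n).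

Definition inv_lim_J (f : R -> R) (a b : R) (x : nat -> R) : Prop :=
  inv_lim f x /\ forall n, inI a b (x n).

(* A tight sequence T_n = [l n, r n] of closed (possibly degenerate) intervals
   properly contained in [0,1] *)
Definition tight (f : R -> R) (l r : nat -> R) : Prop :=
  (forall n, 0 <= l n /\ l n <= r n /\ r n <= 1 /\ ~ (l n = 0 /\ r n = 1)) /\
  (forall n, image_eq f (l (S n)) (r (S n)) (l n) (r n)) /\
  (exists N, forall n, (N <= n)%nat -> l n < r n).

Definition splitting_sequence (f : R -> R) (l r : nat -> R) : Prop :=
  tight f l r /\
  exists P : nat -> Prop,
    (forall m, exists n, (m <= n)%nat /\ P n) /\   (* P is infinite *)
    forall n, P n ->
      exists a b, 0 <= a /\ a < b /\ b <= 1 /\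
        (forall x, inI a b x -> inI (l n) (r n) x -> x = l n \/ x = r n) /\
        (forall y, (exists x, inI a b x /\ f x = y) <->
                   (exists x, inI (l n) (r n) x /\ f x = y)).

Definition admits_splitting (f : R -> R) : Prop :=
  exists l r, splitting_sequence f l r.

Definition fixed_point (f : R -> R) (p : R) : Prop := inI 0 1 p /\ f p = p.

Definition accumulation_point (F : R -> Prop) (d : R) : Prop :=
  forall eps, 0 < eps -> exists p, F p /\ p <> d /\ Rabs (p - d) < eps.

(* Being a limit of fixed points, d is fixed.  If a point of the inverse limit had
   coordinates on both sides of d, then, since d is fixed, some consecutive pair
   y = x_{t+1}, f y = x_t would lie strictly on opposite sides of d.  Take fixed
   points p < q of f between y and f y.  As f p = p and f q = q, every nondegenerate
   subinterval of [p,q] is the image of a nondegenerate subinterval of [p,q], which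
   gives a tight sequence T_n inside [p,q].  The interval between y and the nearer of
   p, q also covers [p,q] and meets it in one endpoint only, so it contains intervals
   S_n with f(S_n) = T_{n-1} = f(T_n): f admits a splitting sequence. *)

From Stdlib Require Import Reals Lra Lia.
From Stdlib Require Import Classical ClassicalEpsilon FunctionalExtensionality.
Open Scope R_scope.

Definition cont_on (a b : R) (g : R -> R) : Prop :=
  forall x, inI a b x -> forall eps, 0 < eps ->
    exists delta, 0 < delta /\
      forall y, inI a b y -> Rabs (y - x) < delta -> Rabs (g y - g x) < eps.

Definition opposite_sides (d a b : R) : Prop := (a < d < b) \/ (b < d < a).

Lemma cont_on_subinterval (g : R -> R) a b a' b' :
  cont_on a b g -> a <= a' -> b' <= b -> cont_on a' b' g.
Proof.
  intros Hc Ha Hb x Hx eps Heps.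
  destruct (Hc x ltac:(unfold inI in *; lra) eps Heps) as [dl [Hdl Hnear]].
  exists dl. split; [exact Hdl|].
  intros y Hy Hyx. apply Hnear; [unfold inI in *; lra | exact Hyx].
Qed.

Lemma cont_on_opp_reflect (g : R -> R) a b :
  cont_on a b g -> cont_on a b (fun t => - g (a + b - t)).
Proof.
  intros Hc x Hx eps Heps.
  destruct (Hc (a + b - x) ltac:(unfold inI in *; lra) eps Heps) as [dl [Hdl Hnear]].
  exists dl. split; [exact Hdl|]. intros y Hy Hyx.
  replace (- g (a + b - y) - - g (a + b - x))
    with (- (g (a + b - y) - g (a + b - x))) by ring.
  rewrite Rabs_Ropp. apply Hnear; [unfold inI in *; lra|].
  replace (a + b - y - (a + b - x)) with (- (y - x)) by ring.
  rewrite Rabs_Ropp. exact Hyx.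
Qed.

Lemma cont_on_const_sub (g : R -> R) a b k :
  cont_on a b g -> cont_on a b (fun t => k - g t).
Proof.
  intros Hc x Hx eps Heps.
  destruct (Hc x Hx eps Heps) as [dl [Hdl Hnear]].
  exists dl. split; [exact Hdl|]. intros y Hy Hyx.
  replace (k - g y - (k - g x)) with (- (g y - g x)) by ring.
  rewrite Rabs_Ropp. exact (Hnear y Hy Hyx).
Qed.

Lemma cont_on_gt_near (g : R -> R) a b x c :
  cont_on a b g -> inI a b x -> c < g x ->
  exists dl, 0 < dl /\ forall y, inI a b y -> Rabs (y - x) < dl -> c < g y.
Proof.
  intros Hc Hx Hcx.
  destruct (Hc x Hx (g x - c)) as [dl [Hdl Hnear]]; [lra|].
  exists dl. split; [exact Hdl|]. intros y Hy Hyx.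
  pose proof (Hnear y Hy Hyx) as Hy'. apply Rabs_def2 in Hy'. lra.
Qed.

Lemma cont_on_lt_near (g : R -> R) a b x c :
  cont_on a b g -> inI a b x -> g x < c ->
  exists dl, 0 < dl /\ forall y, inI a b y -> Rabs (y - x) < dl -> g y < c.
Proof.
  intros Hc Hx Hcx.
  destruct (Hc x Hx (c - g x)) as [dl [Hdl Hnear]]; [lra|].
  exists dl. split; [exact Hdl|]. intros y Hy Hyx.
  pose proof (Hnear y Hy Hyx) as Hy'. apply Rabs_def2 in Hy'. lra.
Qed.

(* m is the supremum of the points of [a,b] where g <= y. *)
Lemma last_crossing (g : R -> R) a b y :
  cont_on a b g -> a <= b -> g a <= y -> y < g b ->
  exists m, a <= m < b /\ g m = y /\ forall r, m < r <= b -> y < g r.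
Proof.
  intros Hc Hab Ha Hb.
  set (E := fun t => a <= t <= b /\ g t <= y).
  destruct (completeness E) as [m [Hub Hlub]].
  { exists b. intros t [Ht _]. lra. }
  { exists a. unfold E. lra. }
  assert (Hm : inI a b m).
  { split; [apply Hub; unfold E; lra|]. apply Hlub. intros t [Ht _]. lra. }
  assert (Hright : forall r, m < r <= b -> y < g r).
  { intros r Hr. apply Rnot_le_lt. intro Hle.
    assert (r <= m) by (apply Hub; unfold E, inI in *; lra). lra. }
  assert (Hgm_le : g m <= y).
  { apply Rnot_lt_le. intro Hlt.
    destruct (cont_on_gt_near g a b m y Hc Hm Hlt) as [dl [Hdl Hnear]].
    assert (m <= m - dl); [|lra].
    apply Hlub. intros t [Ht Hgt]. apply Rnot_lt_le. intro Hfar.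
    assert (t <= m) by (apply Hub; split; assumption).
    assert (y < g t); [|lra].
    apply Hnear; [unfold inI; lra | apply Rabs_def1; lra]. }
  assert (Hmb : m < b).
  { destruct Hm as [_ [Hlt | ->]]; [exact Hlt | lra]. }
  exists m. split; [unfold inI in Hm; lra|]. split; [|exact Hright].
  apply Rle_antisym; [exact Hgm_le|]. apply Rnot_lt_le. intro Hlt.
  destruct (cont_on_lt_near g a b m y Hc Hm Hlt) as [dl [Hdl Hnear]].
  set (r := Rmin b (m + dl / 2)).
  assert (Hr : m < r <= b).
  { split; [apply Rmin_glb_lt; lra | apply Rmin_l]. }
  pose proof (Rmin_r b (m + dl / 2)).
  assert (g r < y); [|pose proof (Hright r Hr); lra].
  apply Hnear; [unfold inI in *; lra | apply Rabs_def1; unfold r in *; lra].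
Qed.

Lemma first_crossing (g : R -> R) a b e :
  cont_on a b g -> a <= b -> g a < e -> e <= g b ->
  exists w, a < w <= b /\ g w = e /\ forall r, a <= r < w -> g r < e.
Proof.
  intros Hc Hab Ha Hb.
  destruct (last_crossing (fun t => - g (a + b - t)) a b (- e)
              (cont_on_opp_reflect g a b Hc) Hab) as [m [Hm [Hgm Hafter]]].
  { replace (a + b - a) with b by ring. lra. }
  { replace (a + b - b) with a by ring. lra. }
  exists (a + b - m). split; [lra|]. split; [lra|].
  intros r Hr. specialize (Hafter (a + b - r) ltac:(lra)).
  replace (a + b - (a + b - r)) with r in Hafter by ring. lra.
Qed.

(* [s,t] runs from the last point where g <= c to the first point where g >= e. *)
Lemma image_eq_subinterval (g : R -> R) a b c e :
  cont_on a b g -> a <= b -> g a <= c -> c < e -> e <= g b ->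
  exists s t, a <= s /\ s < t /\ t <= b /\ image_eq g s t c e.
Proof.
  intros Hc Hab Ha Hce Hb.
  destruct (first_crossing g a b e Hc Hab) as [t [Ht [Hgt Hbefore]]]; [lra|lra|].
  assert (Hct : cont_on a t g) by (apply (cont_on_subinterval g a b); [exact Hc|lra|lra]).
  destruct (last_crossing g a t c Hct) as [s [Hs [Hgs Hafter]]]; [lra|lra|lra|].
  exists s, t. split; [lra|]. split; [lra|]. split; [lra|].
  intro z. split.
  - intros [Hcz [Hze | ->]].
    + assert (Hcst : cont_on s t g)
        by (apply (cont_on_subinterval g a t); [exact Hct|lra|lra]).
      destruct (last_crossing g s t z Hcst) as [m [Hm [Hgm _]]]; [lra|lra|lra|].
      exists m. split; [unfold inI; lra | exact Hgm].
    + exists t. split; [unfold inI; lra | exact Hgt].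
  - intros [x [[Hsx Hxt] <-]]. split.
    + destruct Hsx as [Hsx | <-]; [|lra].
      pose proof (Hafter x ltac:(lra)). lra.
    + destruct Hxt as [Hxt | ->]; [|lra].
      pose proof (Hbefore x ltac:(lra)). lra.
Qed.

Lemma image_eq_sum_sub (g : R -> R) s t c e :
  image_eq (fun x => c + e - g x) s t c e -> image_eq g s t c e.
Proof.
  intros Him z. split.
  - intros Hz.
    destruct (proj1 (Him (c + e - z)) ltac:(unfold inI in *; lra)) as [x [Hx Hgx]].
    exists x. split; [exact Hx | lra].
  - intros [x [Hx Hgx]].
    assert (Hz : inI c e (c + e - z)).
    { apply (proj2 (Him _)). exists x. split; [exact Hx | lra]. }
    unfold inI in *. lra.
Qed.

Lemma image_eq_subinterval_between (g : R -> R) a b u v c e :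
  cont_on a b g -> inI a b u -> inI a b v -> g u <= c -> c < e -> e <= g v ->
  exists s t, s < t /\ ((u <= s /\ t <= v) \/ (v <= s /\ t <= u)) /\ image_eq g s t c e.
Proof.
  intros Hc Hu Hv Hgu Hce Hgv.
  destruct (Rle_or_lt u v) as [Huv | Hvu].
  - assert (Hcuv : cont_on u v g)
      by (apply (cont_on_subinterval g a b); [exact Hc | apply Hu | apply Hv]).
    destruct (image_eq_subinterval g u v c e Hcuv) as [s [t [H1 [H2 [H3 Him]]]]]; try lra.
    exists s, t. split; [lra|]. split; [left; lra | exact Him].
  - assert (Hcvu : cont_on v u g)
      by (apply (cont_on_subinterval g a b); [exact Hc | apply Hv | apply Hu]).
    destruct (image_eq_subinterval (fun x => c + e - g x) v u c e
                (cont_on_const_sub g v u _ Hcvu)) as [s [t [H1 [H2 [H3 Him]]]]]; try lra.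
    exists s, t. split; [lra|]. split; [right; lra | exact (image_eq_sum_sub g s t c e Him)].
Qed.

Lemma dependent_choice {A : Type} (P : A -> Prop) (Rel : A -> A -> Prop) (a0 : A) :
  P a0 -> (forall a, P a -> exists b, P b /\ Rel a b) ->
  exists s : nat -> A, s O = a0 /\ forall n, P (s n) /\ Rel (s n) (s (S n)).
Proof.
  intros H0 Hstep.
  assert (Hnext : forall a : {a | P a},
             {b : {b | P b} | Rel (proj1_sig a) (proj1_sig b)}).
  { intros [a Ha].
    destruct (constructive_indefinite_description _ (Hstep a Ha)) as [b [Hb Hab]].
    exists (exist _ b Hb). exact Hab. }
  set (next := fun a => proj1_sig (Hnext a)).
  exists (fun n => proj1_sig (Nat.iter n next (exist _ a0 H0))).
  split; [reflexivity|]. intro n. split.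
  - apply proj2_sig.
  - exact (proj2_sig (Hnext _)).
Qed.

Lemma backward_interval_chain (g : R -> R) p q :
  cont_on p q g -> p < q -> g p <= p -> q <= g q ->
  exists l r : nat -> R,
    (forall n, p <= l n /\ l n < r n /\ r n <= q) /\
    forall n, image_eq g (l (S n)) (r (S n)) (l n) (r n).
Proof.
  intros Hc Hpq Hgp Hgq.
  set (Inside := fun T : R * R => p <= fst T /\ fst T < snd T /\ snd T <= q).
  destruct (dependent_choice Inside
              (fun T T' => image_eq g (fst T') (snd T') (fst T) (snd T)) (p, q))
    as [T [_ HT]].
  - unfold Inside. simpl. lra.
  - intros [c e] He. unfold Inside in He. simpl in He.
    destruct (image_eq_subinterval g p q c e Hc) as [s [t [H1 [H2 [H3 Him]]]]]; try lra.
    exists (s, t). unfold Inside. simpl. auto.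
  - exists (fun n => fst (T n)), (fun n => snd (T n)).
    split; intro n; apply (HT n).
Qed.

Lemma admits_splitting_of_side_interval (f : R -> R) p q a b u v :
  cont_unit f -> 0 <= p -> p < q -> q <= 1 -> ~ (p = 0 /\ q = 1) ->
  f p <= p -> q <= f q -> (b <= p \/ q <= a) ->
  inI 0 1 u -> inI 0 1 v -> inI a b u -> inI a b v -> f u <= p -> q <= f v ->
  admits_splitting f.
Proof.
  intros Hc Hp Hpq Hq Hnot01 Hfp Hfq Hside Hu01 Hv01 Hu Hv Hfu Hfv.
  destruct (backward_interval_chain f p q) as [l [r [Hlr Him]]]; try assumption.
  { apply (cont_on_subinterval f 0 1); [exact Hc | lra | lra]. }
  exists l, r. split; [split; [|split]|].
  - intro n. destruct (Hlr n) as [H1 [H2 H3]].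
    split; [lra|]. split; [lra|]. split; [lra|].
    intros [H4 H5]. apply Hnot01. lra.
  - exact Him.
  - exists O. intros n _. apply Hlr.
  - exists (fun n => (1 <= n)%nat). split.
    { intro m. exists (S m). split; lia. }
    intros [|k] Hk; [lia|].
    destruct (Hlr k) as [Hk1 [Hk2 Hk3]].
    destruct (image_eq_subinterval_between f 0 1 u v (l k) (r k) Hc)
      as [s [t [Hst [Hbetween HimS]]]]; try assumption; try lra.
    destruct (Hlr (S k)) as [HS1 [HS2 HS3]].
    exists s, t. split; [unfold inI in *; lra|]. split; [exact Hst|].
    split; [unfold inI in *; lra|].
    split.
    + intros x Hx HxT. unfold inI in *. lra.
    + intro z. rewrite <- (HimS z), <- (Him k z). tauto.
Qed.

Lemma accumulation_point_inI (F : R -> Prop) a b d :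
  (forall p, F p -> inI a b p) -> accumulation_point F d -> inI a b d.
Proof.
  intros HF Hacc. split; apply Rnot_lt_le; intro Hout.
  - destruct (Hacc (a - d)) as [p [Hp [_ Hpd]]]; [lra|].
    destruct (HF p Hp). apply Rabs_def2 in Hpd. lra.
  - destruct (Hacc (d - b)) as [p [Hp [_ Hpd]]]; [lra|].
    destruct (HF p Hp). apply Rabs_def2 in Hpd. lra.
Qed.

Lemma accumulation_point_two_near (F : R -> Prop) d m :
  accumulation_point F d -> 0 < m ->
  exists p q, F p /\ F q /\ p < q /\ d - m < p /\ q < d + m.
Proof.
  intros Hacc Hm.
  destruct (Hacc m Hm) as [p [Hp [Hpd Hpm]]].
  destruct (Hacc (Rabs (p - d))) as [q [Hq [_ Hqm]]].
  { apply Rabs_pos_lt. lra. }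
  assert (Hqm' : Rabs (q - d) < m) by lra.
  apply Rabs_def2 in Hpm. apply Rabs_def2 in Hqm'.
  destruct (Rtotal_order p q) as [Hlt | [Heq | Hgt]].
  - exists p, q. repeat split; auto; lra.
  - subst q. lra.
  - exists q, p. repeat split; auto; lra.
Qed.

Lemma accumulation_point_fixed (f : R -> R) d :
  cont_unit f -> accumulation_point (fixed_point f) d -> fixed_point f d.
Proof.
  intros Hc Hacc.
  assert (Hd : inI 0 1 d)
    by exact (accumulation_point_inI _ 0 1 d (fun p Hp => proj1 Hp) Hacc).
  split; [exact Hd|].
  assert (Hclose : forall eps, 0 < eps -> Rabs (f d - d) < 2 * eps).
  { intros eps Heps.
    destruct (Hc d Hd eps Heps) as [dl [Hdl Hnear]].
    destruct (Hacc (Rmin dl eps)) as [p [[Hp Hfp] [_ Hpd]]].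
    { apply Rmin_glb_lt; lra. }
    pose proof (Rmin_l dl eps). pose proof (Rmin_r dl eps).
    pose proof (Hnear p Hp ltac:(lra)) as Hfpd. rewrite Hfp in Hfpd.
    apply Rabs_def2 in Hfpd. apply Rabs_def2 in Hpd.
    apply Rabs_def1; lra. }
  destruct (Req_dec (f d) d) as [Heq | Hne]; [exact Heq|].
  assert (Hpos : 0 < Rabs (f d - d)) by (apply Rabs_pos_lt; lra).
  pose proof (Hclose (Rabs (f d - d) / 2) ltac:(lra)). lra.
Qed.

Lemma admits_splitting_of_opposite_sides (f : R -> R) d y :
  cont_unit f -> accumulation_point (fixed_point f) d -> inI 0 1 y ->
  opposite_sides d y (f y) -> admits_splitting f.
Proof.
  intros Hc Hacc Hy [[Hyd Hdf] | [Hfd Hdy]].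
  - destruct (accumulation_point_two_near _ d (Rmin (d - y) (f y - d)) Hacc)
      as [p [q [[Hp Hfp] [[Hq Hfq] [Hpq [Hpm Hqm]]]]]].
    { apply Rmin_glb_lt; lra. }
    pose proof (Rmin_l (d - y) (f y - d)). pose proof (Rmin_r (d - y) (f y - d)).
    apply (admits_splitting_of_side_interval f p q y p p y);
      try assumption; unfold inI in *; lra.
  - destruct (accumulation_point_two_near _ d (Rmin (y - d) (d - f y)) Hacc)
      as [p [q [[Hp Hfp] [[Hq Hfq] [Hpq [Hpm Hqm]]]]]].
    { apply Rmin_glb_lt; lra. }
    pose proof (Rmin_l (y - d) (d - f y)). pose proof (Rmin_r (y - d) (d - f y)).
    apply (admits_splitting_of_side_interval f p q q y y q);
      try assumption; unfold inI in *; lra.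
Qed.

(* Without crossings, a coordinate strictly on one side of the fixed point d forces
   the next one to that side too: it cannot be d, whose only backward orbit is d. *)
Lemma backward_orbit_crosses (g : R -> R) (x : nat -> R) d i j :
  g d = d -> (forall n, g (x (S n)) = x n) -> x i < d -> d < x j ->
  exists t, opposite_sides d (x (S t)) (x t).
Proof.
  intros Hgd Hx Hi Hj. apply NNPP. intro Hno.
  assert (Hstep : forall n, (x n < d -> x (S n) < d) /\ (d < x n -> d < x (S n))).
  { intro n.
    assert (Hnot : ~ opposite_sides d (x (S n)) (x n)) by (intro H; apply Hno; eauto).
    unfold opposite_sides in Hnot.
    destruct (Rtotal_order (x (S n)) d) as [H | [H | H]].
    - split; intro; [exact H | lra].
    - rewrite <- (Hx n), H, Hgd. lra.
    - split; intro; [lra | exact H]. }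
  assert (Hkeep : forall k n, (x n < d -> x (n + k)%nat < d) /\
                              (d < x n -> d < x (n + k)%nat)).
  { induction k as [|k IH]; intro n.
    - rewrite Nat.add_0_r. auto.
    - rewrite Nat.add_succ_r. destruct (IH n), (Hstep (n + k)%nat). auto. }
  destruct (Nat.le_gt_cases i j) as [Hij | Hji].
  - replace j with (i + (j - i))%nat in Hj by lia.
    pose proof (proj1 (Hkeep (j - i)%nat i) Hi). lra.
  - replace i with (j + (i - j))%nat in Hi by lia.
    pose proof (proj2 (Hkeep (i - j)%nat j) Hj). lra.
Qed.

Lemma inv_lim_one_side (f : R -> R) d x :
  cont_unit f -> ~ admits_splitting f -> accumulation_point (fixed_point f) d ->
  inv_lim f x -> inv_lim_J f 0 d x \/ inv_lim_J f d 1 x.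
Proof.
  intros Hc Hns Hacc [Hx01 Hxf].
  destruct (accumulation_point_fixed f d Hc Hacc) as [_ Hfd].
  destruct (classic (exists j, d < x j)) as [[j Hj] | Hnone].
  - right. split; [split; assumption|]. intro n. split; [|apply Hx01].
    apply Rnot_lt_le. intro Hn. apply Hns.
    destruct (backward_orbit_crosses f x d n j Hfd Hxf Hn Hj) as [t Ht].
    apply (admits_splitting_of_opposite_sides f d (x (S t)) Hc Hacc (Hx01 _)).
    rewrite Hxf. exact Ht.
  - left. split; [split; assumption|]. intro n. split; [apply Hx01|].
    apply Rnot_lt_le. intro Hn. apply Hnone. eauto.
Qed.

Theorem corollary3p12 (f : R -> R) (d : R) :
  maps_unit f -> cont_unit f -> surj_unit f ->
  ~ admits_splitting f ->
  accumulation_point (fixed_point f) d ->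
  (forall x, inv_lim f x <-> (inv_lim_J f 0 d x \/ inv_lim_J f d 1 x)) /\
  (forall x, (inv_lim_J f 0 d x /\ inv_lim_J f d 1 x) <-> x = (fun _ => d)).
Proof.
  intros _ Hc _ Hns Hacc.
  destruct (accumulation_point_fixed f d Hc Hacc) as [[Hd0 Hd1] Hfd].
  split; intro x; split.
  - exact (inv_lim_one_side f d x Hc Hns Hacc).
  - intros [[Hx _] | [Hx _]]; exact Hx.
  - intros [[_ Hlow] [_ Hhigh]]. apply functional_extensionality. intro n.
    destruct (Hlow n), (Hhigh n). lra.
  - intros ->. unfold inv_lim_J, inv_lim, inI.
    repeat split; intros; try rewrite Hfd; lra.
Qed.
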